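(* Let $H=\{h_1,h_2,h_3\}$ with $\kappa_{h}=2$ for all $h\in H$, $D=\{f,m,s_1,s_2,s_3,s_4\}$ with single doctors $S=\{s_1,s_2,s_3,s_4\}$ and unique couple $c=\{f,m\}$. Suppose the hospitals' preferences over individual doctors are (best first, $\emptyset$ last): $\tilde P_{h_1}: s_3,s_4,s_1,f,m,s_2$; $\tilde P_{h_2}: s_4,s_3,f,m,s_1,s_2$; $\tilde P_{h_3}: s_3,s_4,m,f,s_1,s_2$, with each $P_h$ an arbitrary responsive extension of $\tilde P_h$ to feasible sets. Suppose the doctors' preferences are (best first, $\emptyset$ last): $P_{s_1}: h_2,h_1,h_3$; $P_{s_2}: h_3,h_1,h_2$; $P_{s_3}: h_1,h_2,h_3$; $P_{s_4}: h_2,h_1,h_3$; $P_f: h_1,h_3,h_2$; $P_m: h_2,h_1,h_3$; and the couple's preference $P_c$ ranks $(h_1,h_2),(h_1,h_1),(h_1,h_3),(h_3,h_3),(h_3,h_2),(h_3,h_1),(h_2,h_2),(h_2,h_1),(h_2,h_3)$ in this order, followed by all pairs in $\bar H^2\setminus H^2$ (in any order). Then no stable matching exists at this preference profile.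
   Context: Standing model. Let $H$ be a finite set of hospitals with $|H|\ge 2$; each $h\in H$ has a capacity $\kappa_h\in\mathbb{N}$ with $\kappa_h\ge 2$. Write $\bar H=H\cup\{\emptyset\}$, where being assigned $\emptyset$ means being unmatched. The finite set of doctors is $D=F\cup M\cup S$ (pairwise disjoint), with $F=\{f_1,\dots,f_k\}$, $M=\{m_1,\dots,m_k\}$, $k\ge 1$; the set of couples is $C=\{\{f_1,m_1\},\dots,\{f_k,m_k\}\}$, and doctors in $S$ are called single doctors. Assume $|D|\ge 4$ and $\sum_{h\in H}\kappa_h=|D|$. A matching is a map $\mu$ assigning to each $h\in H$ a set $\mu(h)\subseteq D$ with $|\mu(h)|\le\kappa_h$ and to each doctor $d$ an element $\mu(d)\in\bar H$, such that $\mu(d)=h$ iff $d\in\mu(h)$; for a couple $c=\{f,m\}$ write $\mu(c)=(\mu(f),\mu(m))$. For a set $X$, $\mathbb{L}(X)$ is the set of strict linear orders (preferences) on $X$; for a preference $P$, $R$ denotes its reflexive version ($xRy$ iff $x=y$ or $xPy$), and $r_1(P)$ its top element. Each hospital $h$ has a preference $\tilde P_h\in\mathbb{L}(D\cup\{\emptyset\})$ over individual doctors with $d\,\tilde P_h\,\emptyset$ for all $d\in D$, and a preference $P_h$ over the feasible sets $\{D'\subseteq D:|D'|\le\kappa_h\}$ that is responsive with respect to $\tilde P_h$: (i) on singletons and $\emptyset$, $P_h$ agrees with $\tilde P_h$; (ii) for all $D'\subsetneq D$ and all $D_1,D_2\subseteq D\setminus D'$ with $|D'\cup D_1|\le\kappa_h$,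 $|D'\cup D_2|\le\kappa_h$: $(D'\cup D_1)\,P_h\,(D'\cup D_2)$ iff $D_1\,P_h\,D_2$. Each doctor $d\in D$ has a preference $P_d\in\mathbb{L}(\bar H)$ with $h\,P_d\,\emptyset$ for all $h\in H$. Each couple $c=\{f,m\}$ has a preference $P_c\in\mathbb{L}(\bar H^2)$, where the pair $(h,h')$ means $f$ is assigned $h$ and $m$ is assigned $h'$; every pair in $H^2$ is preferred under $P_c$ to every pair in $\bar H^2\setminus H^2$. A preference profile consists of such preferences for all doctors, all couples and all hospitals. Blocking and stability. At a matching $\mu$, hospital $h$ is interested in a set $D'\subseteq D$ if there is $D''\subseteq\mu(h)$ with $|(\mu(h)\setminus D'')\cup D'|\le\kappa_h$ and $((\mu(h)\setminus D'')\cup D')\,P_h\,\mu(h)$. A pair $(h,s)$ with $h\in H$, $s\in S$ blocks $\mu$ if $h\,P_s\,\mu(s)$ and $h$ is interested in $\{s\}$. For a couple $c=\{f,m\}$ and $h_f,h_m\in H$, $((h_f,h_m),c)$ blocks $\mu$ if $(h_f,h_m)\,P_c\,\mu(c)$ and: (i) if $h_f\ne h_m$, $\mu(f)\ne h_f$ and $\mu(m)\ne h_m$, then $h_f$ is interested in $\{f\}$ and $h_m$ is interested in $\{m\}$; (ii) if $h_f\ne h_m$ and, for $\{x,y\}=\{f,m\}$, $\mu(x)=h_x$ and $\mu(y)\neq h_y$, then $h_y$ is interested in $\{y\}$; (iii) if $h_f=h_m=h$, then $h$ is interested in $\{f,m\}$. A matching is stable if it is blocked by no such pair. *)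

From mathcomp Require Import all_boot.
Set Implicit Arguments. Unset Strict Implicit. Unset Printing Implicit Defensive.

(* Hospitals h1,h2,h3 are the ordinals 0,1,2 of 'I_3.
   Doctors: f = 0, m = 1, s1 = 2, s2 = 3, s3 = 4, s4 = 5 in 'I_6.
   Being unmatched (emptyset) is [None : option Hosp]. *)
Definition Hosp := 'I_3.
Definition Doc := 'I_6.

Definition kappa : nat := 2.

Definition fD : Doc := @Ordinal 6 0 isT.
Definition mD : Doc := @Ordinal 6 1 isT.
Definition isSingle (d : Doc) : bool := 2 <= val d.

Definition hlist (h : Hosp) : seq nat :=
  match val h with
  | 0 => [:: 4; 5; 2; 0; 1; 3]
  | 1 => [:: 5; 4; 0; 1; 2; 3]
  | _ => [:: 4; 5; 1; 0; 2; 3]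
  end.
Definition hrank (h : Hosp) (d : Doc) : nat := index (val d) (hlist h).

Definition tildeP (h : Hosp) (x y : option Doc) : bool :=
  match x, y with
  | Some d, Some d' => hrank h d < hrank h d'
  | Some _, None => true
  | None, _ => false
  end.

Definition setof (x : option Doc) : {set Doc} :=
  match x with Some d => [set d] | None => set0 end.

Definition feasible (A : {set Doc}) : bool := #|A| <= kappa.

Definition responsive_pref (h : Hosp) (P : rel {set Doc}) : Prop :=
  [/\ (forall A, feasible A -> ~~ P A A),
      (forall A B C, feasible A -> feasible B -> feasible C ->
          P A B -> P B C -> P A C),
      (forall A B, feasible A -> feasible B -> A != B -> P A B || P B A),
      (forall x y : option Doc, P (setof x) (setof y) = tildeP h x y) &
      (forall D' D1 D2 : {set Doc}, D' \proper [set: Doc] ->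
          [disjoint D1 & D'] -> [disjoint D2 & D'] ->
          feasible (D' :|: D1) -> feasible (D' :|: D2) ->
          P (D' :|: D1) (D' :|: D2) = P D1 D2)].

Definition dlist (d : Doc) : seq nat :=
  match val d with
  | 0 => [:: 0; 2; 1]
  | 1 => [:: 1; 0; 2]
  | 2 => [:: 1; 0; 2]
  | 3 => [:: 2; 0; 1]
  | 4 => [:: 0; 1; 2]
  | _ => [:: 1; 0; 2]
  end.
Definition drank (d : Doc) (o : option Hosp) : nat :=
  match o with None => 3 | Some h => index (val h) (dlist d) end.
Definition dprefers (d : Doc) (a b : option Hosp) : bool := drank d a < drank d b.

(* The couple's ranking of H^2 (pairs (h_f, h_m)), best first. *)
Definition clist : seq (nat * nat) :=
  [:: (0,1); (0,0); (0,2); (2,2); (2,1); (2,0); (1,1); (1,0); (1,2)].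
Definition crank (a b : Hosp) : nat := index (val a, val b) clist.

Definition inH2 (x : option Hosp * option Hosp) : bool :=
  (x.1 != None) && (x.2 != None).

Definition couple_pref (Pc : rel (option Hosp * option Hosp)) : Prop :=
  [/\ (forall x, ~~ Pc x x),
      (forall x y z, Pc x y -> Pc y z -> Pc x z),
      (forall x y, x != y -> Pc x y || Pc y x),
      (forall a1 a2 b1 b2 : Hosp,
          Pc (Some a1, Some a2) (Some b1, Some b2) = (crank a1 a2 < crank b1 b2)) &
      (forall x y, inH2 x -> ~~ inH2 y -> Pc x y)].

Definition assigned (mu : Doc -> option Hosp) (h : Hosp) : {set Doc} :=
  [set d | mu d == Some h].

Definition is_matching (mu : Doc -> option Hosp) : Prop :=
  forall h, #|assigned mu h| <= kappa.

Definition interested (PH : Hosp -> rel {set Doc}) (mu : Doc -> option Hosp)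
    (h : Hosp) (D' : {set Doc}) : Prop :=
  exists D'' : {set Doc},
    [/\ D'' \subset assigned mu h,
        #|(assigned mu h :\: D'') :|: D'| <= kappa &
        PH h ((assigned mu h :\: D'') :|: D') (assigned mu h)].

Definition single_blocks PH mu (h : Hosp) (s : Doc) : Prop :=
  [/\ isSingle s, dprefers s (Some h) (mu s) & interested PH mu h [set s]].

Definition couple_blocks PH (Pc : rel (option Hosp * option Hosp)) mu
    (hf hm : Hosp) : Prop :=
  [/\ Pc (Some hf, Some hm) (mu fD, mu mD),
      (hf != hm -> mu fD != Some hf -> mu mD != Some hm ->
          interested PH mu hf [set fD] /\ interested PH mu hm [set mD]),
      (hf != hm -> mu fD = Some hf -> mu mD != Some hm ->
          interested PH mu hm [set mD]),
      (hf != hm -> mu mD = Some hm -> mu fD != Some hf ->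
          interested PH mu hf [set fD]) &
      (hf = hm -> interested PH mu hf [set fD; mD])].

Definition stable PH Pc mu : Prop :=
  is_matching mu /\
  (forall h s, ~ single_blocks PH mu h s) /\
  (forall hf hm, ~ couple_blocks PH Pc mu hf hm).

From mathcomp Require Import all_boot.
From Stdlib Require Import FunctionalExtensionality.
Set Implicit Arguments. Unset Strict Implicit. Unset Printing Implicit Defensive.

(* Responsiveness reduces a hospital's interest to two concrete moves: with a
   free seat it takes any further doctor, and when full it swaps out a doctor it
   ranks below the newcomer.  Both are decided by the rankings over individual
   doctors alone, whatever responsive extension P_h is chosen, and the couple's
   comparisons needed are fixed by its ranking of H^2.  A computation over all
   4^6 ways of assigning the six doctors to h1, h2, h3 or unemployment then shows
   that every assignment respecting the capacities is blocked by one of these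
   moves. *)

Lemma responsive_exchange h (P : rel {set Doc}) (B : {set Doc}) (x : Doc)
    (y : option Doc) :
  responsive_pref h P -> #|B| <= 1 -> x \notin B -> [disjoint setof y & B] ->
  P (B :|: [set x]) (B :|: setof y) = tildeP h (Some x) y.
Proof.
move=> HP cardB xB yB; case: HP => _ _ _ P_single P_resp.
have card_setof : #|setof y| <= 1 by case: y {yB} => [d|]; rewrite ?cards1 ?cards0.
rewrite -(P_single (Some x) y) P_resp //.
- by rewrite properEcard subsetT cardsT card_ord (leq_ltn_trans cardB).
- by rewrite disjoints1.
- by rewrite /feasible setUC cardsU1 (negPf xB) add1n ltnS.
- by rewrite /feasible (leq_trans (leq_card_setU _ _)) // (leq_add cardB card_setof).
Qed.

(* Explicit enumerations: [enum 'I_n] and finsets evaluate very slowly under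
   [vm_compute]. *)
Definition docs : seq Doc :=
  [:: @Ordinal 6 0 isT; @Ordinal 6 1 isT; @Ordinal 6 2 isT;
      @Ordinal 6 3 isT; @Ordinal 6 4 isT; @Ordinal 6 5 isT].
Definition hosps : seq Hosp := [:: @Ordinal 3 0 isT; @Ordinal 3 1 isT; @Ordinal 3 2 isT].

Lemma enum_docs : enum Doc = docs.
Proof. by apply: (inj_map val_inj); rewrite val_enum_ord. Qed.

Lemma mem_hosps (h : Hosp) : h \in hosps.
Proof. by case: h => [[|[|[|]]] ?]. Qed.

Definition load (mu : Doc -> option Hosp) (h : Hosp) : nat :=
  count (fun d => mu d == Some h) docs.

Lemma card_assigned mu h : #|assigned mu h| = load mu h.
Proof. by rewrite cardsE cardE /enum_mem -enumT enum_docs size_filter. Qed.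

(* [k] is a partner already at [h], who must not be the doctor swapped out. *)
Definition admits mu (h : Hosp) (k : option Doc) (x : Doc) : bool :=
  (load mu h <= 1) ||
  has (fun d => [&& mu d == Some h, Some d != k & tildeP h (Some x) (Some d)]) docs.

Lemma interested_admits PH mu h k x :
  responsive_pref h (PH h) -> #|assigned mu h| <= kappa ->
  setof k \subset assigned mu h -> mu x != Some h -> admits mu h k x ->
  interested PH mu h (setof k :|: [set x]).
Proof.
move=> HP cardA kA xh.
have xA : x \notin assigned mu h by rewrite inE.
case/orP => [|/hasP[d _ /and3P[dh dk xd]]].
- rewrite -card_assigned => smallA.
  exists set0; rewrite setD0 setUA (setUidPl kA); split; first exact: sub0set.
    by rewrite setUC cardsU1 (negPf xA) add1n ltnS.
  rewrite -[X in PH h _ X]setU0 (responsive_exchange (y := None) HP smallA xA) //.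
  by rewrite -setI_eq0 set0I.
- have dA : d \in assigned mu h by rewrite inE.
  have cardAd : #|assigned mu h :\ d| <= 1 by move: cardA; rewrite (cardsD1 d) dA.
  have kAd : setof k \subset assigned mu h :\ d.
    case: k dk kA => [k|] dk; last by move=> _; apply: sub0set.
    rewrite !sub1set !inE => kh; rewrite kh andbT.
    by apply: contraNneq dk => ->.
  exists [set d]; rewrite setUA (setUidPl kAd); split; first by rewrite sub1set.
    by rewrite setUC cardsU1; exact: leq_add (leq_b1 _) cardAd.
  rewrite -[X in PH h _ X](setD1K dA) [d |: _]setUC.
  rewrite (responsive_exchange (y := Some d) HP cardAd) //.
    by apply: contra xA; rewrite inE => /andP[].
  by rewrite disjoints1 !inE eqxx.
Qed.

Definition couple_prefers (hf hm : Hosp) (y : option Hosp * option Hosp) : bool :=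
  if y is (Some a, Some b) then crank hf hm < crank a b else true.

Lemma couple_prefersP Pc hf hm y :
  couple_pref Pc -> couple_prefers hf hm y -> Pc (Some hf, Some hm) y.
Proof.
case=> _ _ _ Pc_rank Pc_H2; case: y => [[a|] [b|]] //= pref; first by rewrite Pc_rank.
all: exact: Pc_H2.
Qed.

(* Sufficient, not necessary, conditions for blocking; at this profile they
   already catch every matching. *)
Definition single_blockb mu (h : Hosp) (s : Doc) : bool :=
  [&& isSingle s, dprefers s (Some h) (mu s) & admits mu h None s].

Definition couple_blockb mu (hf hm : Hosp) : bool :=
  couple_prefers hf hm (mu fD, mu mD) &&
  if hf == hm then
    [&& mu fD == Some hf, mu mD != Some hf & admits mu hf (Some fD) mD] ||
    [&& mu mD == Some hf, mu fD != Some hf & admits mu hf (Some mD) fD]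
  else ((mu fD == Some hf) || admits mu hf None fD) &&
       ((mu mD == Some hm) || admits mu hm None mD).

Section Soundness.

Variables (PH : Hosp -> rel {set Doc}) (mu : Doc -> option Hosp).
Hypotheses (HPH : forall h, responsive_pref h (PH h)) (Hmu : is_matching mu).

Lemma interested_set1 h x :
  (mu x == Some h) || admits mu h None x -> mu x != Some h ->
  interested PH mu h [set x].
Proof.
move=> + xh; rewrite (negPf xh) -(set0U [set x]).
exact: (interested_admits (k := None) (HPH h) (Hmu h) (sub0set _) xh).
Qed.

Lemma single_blockbP h s : single_blockb mu h s -> single_blocks PH mu h s.
Proof.
case/and3P=> single pref adm; split=> //.
apply: interested_set1; first by rewrite adm orbT.
by apply: contraTneq pref => ->; rewrite /dprefers ltnn.
Qed.

Lemma couple_blockbP Pc hf hm :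
  couple_pref Pc -> couple_blockb mu hf hm -> couple_blocks PH Pc mu hf hm.
Proof.
move=> HPc /andP[]; case: eqVneq => [<- | hfm] /(couple_prefersP HPc) pref.
  move=> adm; split; rewrite ?eqxx //= => _.
  case/orP: adm => /and3P[kh xh adm].
    have kA : setof (Some fD) \subset assigned mu hf by rewrite sub1set inE.
    exact: (interested_admits (HPH hf) (Hmu hf) kA xh adm).
  have kA : setof (Some mD) \subset assigned mu hf by rewrite sub1set inE.
  by rewrite setUC; exact: (interested_admits (HPH hf) (Hmu hf) kA xh adm).
case/andP=> adm_f adm_m; split=> // [_ fh mh|_ _|_ _|].
- by split; [exact: interested_set1 adm_f fh | exact: interested_set1 adm_m mh].
- exact: interested_set1 adm_m.
- exact: interested_set1 adm_f.
- by move/eqP; rewrite (negPf hfm).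
Qed.

End Soundness.

Definition matchingb mu : bool := all (fun h => load mu h <= kappa) hosps.

Definition blockedb mu : bool :=
  has (fun h => has (single_blockb mu h) docs) hosps ||
  has (fun hf => has (couple_blockb mu hf) hosps) hosps.

Definition hbar : seq (option Hosp) := None :: map Some hosps.

Fixpoint assignments (n : nat) : seq (seq (option Hosp)) :=
  if n is n'.+1 then [seq o :: w | o <- hbar, w <- assignments n'] else [:: [::]].

Lemma mem_hbar (o : option Hosp) : o \in hbar.
Proof. by case: o => [h|]; rewrite ?mem_head // in_cons map_f ?mem_hosps. Qed.

Lemma mem_assignments w : w \in assignments (size w).
Proof.
by elim: w => [//|o w IHw]; apply: (allpairs_f (@cons _)) IHw; apply: mem_hbar.
Qed.

Lemma assignments_blocked :
  all (fun w => let mu := fun d : Doc => nth None w d in matchingb mu ==> blockedb mu)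
      (assignments 6).
Proof. by vm_compute. Qed.

Lemma matching_blocked mu : is_matching mu -> blockedb mu.
Proof.
move=> Hmu; set w := [seq mu d | d <- enum Doc].
have mu_w : (fun d : Doc => nth None w d) = mu.
  apply: functional_extensionality => d.
  by rewrite (nth_map d) ?size_enum_ord // nth_ord_enum.
have w_all : w \in assignments 6.
  by have := mem_assignments w; rewrite size_map size_enum_ord.
have := allP assignments_blocked w w_all; rewrite /= mu_w => /implyP; apply.
by apply/allP => h _; rewrite -card_assigned.
Qed.

Theorem mainTheorem9 (PH : Hosp -> rel {set Doc})
    (Pc : rel (option Hosp * option Hosp)) :
  (forall h, responsive_pref h (PH h)) ->
  couple_pref Pc ->
  ~ exists mu : Doc -> option Hosp, stable PH Pc mu.
Proof.
move=> HPH HPc [mu [Hmu [no_single no_couple]]].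
case/orP: (matching_blocked Hmu) => /hasP[h _ /hasP[x _ block]].
- exact: no_single h x (single_blockbP HPH Hmu block).
- exact: no_couple h x (couple_blockbP HPH Hmu HPc block).
Qed.
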